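(* Let $\mu$ be a distribution over $\{-1,+1\}^n$, $\alpha\in(0,1)$, and $D\subseteq\mathbb R^n_{>0}$. Define $$D^{\mathrm{hom}}=\left\{(z_1,\dots,z_n,z_{\bar1},\dots,z_{\bar n})\in\mathbb R^{2n}_{>0}:\left(\tfrac{z_1}{z_{\bar1}},\dots,\tfrac{z_n}{z_{\bar n}}\right)\in D\right\}.$$ Then $\mu$ is $(1/\alpha)$-product dominated on $D$ if and only if $\mu^{\mathrm{hom}}$ is $(1/\alpha)$-entropically independent on $D^{\mathrm{hom}}$. In particular, $\mu$ is $(1/\alpha)$-product dominated if and only if $\mu^{\mathrm{hom}}$ is $(1/\alpha)$-entropically independent.
   Context: $\mu_i$ is the marginal of $\mu$ on coordinate $i$. The generating function of $\mu$ is $g_\mu(z)=\sum_\sigma\mu(\sigma)\prod_{i:\sigma_i=+1}z_i$. $\mu$ is $(1/\alpha)$-product dominated on $D$ if for all $z\in D$, $g_\mu(z_1^\alpha,\dots,z_n^\alpha)^{1/\alpha}\le\prod_{i=1}^n(\mu_i(+1)z_i+\mu_i(-1))$; ''product dominated'' without qualification means on $D=\mathbb R^n_{>0}$. Homogenization: with $[\bar n]=\{\bar1,\dots,\bar n\}$, $\mu^{\mathrm{hom}}$ is the distribution over $\binom{[n]\cup[\bar n]}{n}$ with $\mu^{\mathrm{hom}}(S_\sigma)=\mu(\sigma)$, where $S_\sigma=\{i:\sigma_i=+1\}\cup\{\bar i:\sigma_i=-1\}$, and $\mu^{\mathrm{hom}}(T)=0$ for other $T$. For a distribution $\pi$ over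 $\binom{U}{k}$ with generating function $g_\pi(z)=\sum_S\pi(S)\prod_{i\in S}z_i$, $\pi$ is $(1/\alpha)$-entropically independent on $D'\subseteq\mathbb R^U_{>0}$ if for all $z\in D'$, $g_\pi(z^\alpha)^{1/(k\alpha)}\le\frac1k\sum_{i\in U}\Pr_{S\sim\pi}[i\in S]z_i$ (with $z^\alpha$ coordinatewise); without qualification, on $D'=\mathbb R^U_{>0}$. *)

From HB Require Import structures.
From mathcomp Require Import all_boot all_order all_algebra.
From mathcomp Require Import classical_sets reals exp.
Set Implicit Arguments. Unset Strict Implicit. Unset Printing Implicit Defensive.
Import Order.TTheory GRing.Theory Num.Theory.
Local Open Scope ring_scope.
Local Open Scope classical_set_scope.

(* Configurations sigma in {-1,+1}^n, encoded as boolean vectors: true = +1, false = -1. *)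
Notation cube n := {ffun 'I_n -> bool}.

Section Defs.
Variable R : realType.

Definition is_distribution (T : finType) (mu : T -> R) :=
  (forall t, 0 <= mu t) /\ \sum_t mu t = 1.

Definition marg_plus n (mu : cube n -> R) (i : 'I_n) : R :=
  \sum_(s : cube n | s i) mu s.
Definition marg_minus n (mu : cube n -> R) (i : 'I_n) : R :=
  \sum_(s : cube n | ~~ s i) mu s.

Definition gen_cube n (mu : cube n -> R) (z : 'I_n -> R) : R :=
  \sum_(s : cube n) mu s * \prod_(i | s i) z i.

Definition product_dominated n (mu : cube n -> R) (alpha : R)
    (D : set ('I_n -> R)) : Prop :=
  forall z, D z ->
    powR (gen_cube mu (fun i => powR (z i) alpha)) alpha^-1
    <= \prod_(i < n) (marg_plus mu i * z i + marg_minus mu i).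

(* ground set [n] \cup [nbar] : inl i = i, inr i = ibar *)
Definition S_of n (s : cube n) : {set 'I_n + 'I_n} :=
  [set u | match u with inl i => s i | inr i => ~~ s i end].

Definition mu_hom n (mu : cube n -> R) (T : {set 'I_n + 'I_n}) : R :=
  \sum_(s : cube n | S_of s == T) mu s.

Definition gen_set (U : finType) (pi : {set U} -> R) (z : U -> R) : R :=
  \sum_(S : {set U}) pi S * \prod_(i in S) z i.

Definition incl_prob (U : finType) (pi : {set U} -> R) (i : U) : R :=
  \sum_(S : {set U} | i \in S) pi S.

(* (1/alpha)-entropically independent on D', for pi over k-subsets of U *)
Definition entropically_independent (U : finType) (k : nat) (pi : {set U} -> R)
    (alpha : R) (D' : set (U -> R)) : Prop :=
  forall z, D' z ->
    powR (gen_set pi (fun u => powR (z u) alpha)) (k%:R * alpha)^-1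
    <= (k%:R)^-1 * \sum_(i : U) incl_prob pi i * z i.

Definition pos_orthant (U : Type) : set (U -> R) := [set z | forall u, 0 < z u].

Definition D_hom n (D : set ('I_n -> R)) : set ('I_n + 'I_n -> R) :=
  [set z | (forall u, 0 < z u) /\ D (fun i => z (inl i) / z (inr i))].

End Defs.

From HB Require Import structures.
From mathcomp Require Import all_boot all_order all_algebra.
From mathcomp Require Import boolp classical_sets reals exp.
From mathcomp Require Import ring lra.
Set Implicit Arguments. Unset Strict Implicit. Unset Printing Implicit Defensive.
Import Order.TTheory GRing.Theory Num.Theory.
Local Open Scope ring_scope.
Local Open Scope classical_set_scope.

(* Writing z_i = w_i / w_ibar, the generating function of the homogenization
   factors as g_hom(w^a) = (prod_i w_ibar)^a g_mu(z^a), and the first moments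
   of mu_hom give prod_i (mu_i(+1) w_i + mu_i(-1) w_ibar)
   = (prod_i w_ibar) prod_i (mu_i(+1) z_i + mu_i(-1)).  Product domination at z
   is therefore the same as the homogeneous inequality
   g_hom(w^a)^(1/a) <= prod_i (mu_i(+1) w_i + mu_i(-1) w_ibar).
   Taking n-th roots and applying AM-GM turns it into entropic independence
   at w.  Conversely, both sides are invariant under rescaling each pair
   (w_i, w_ibar), so we may normalise every factor to 1; then AM-GM is an
   equality and entropic independence gives back the homogeneous inequality. *)

Section PowR.
Variable R : realType.

Lemma powR_prod (I : finType) (P : pred I) (x : I -> R) r :
  (forall i, 0 <= x i) -> powR (\prod_(i | P i) x i) r = \prod_(i | P i) powR (x i) r.
Proof.
move=> x_ge0.
suff [] : 0 <= \prod_(i | P i) x i /\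
          powR (\prod_(i | P i) x i) r = \prod_(i | P i) powR (x i) r by [].
apply: (big_rec2 (fun y1 y2 => 0 <= y1 /\ powR y1 r = y2)) => [|i y1 y2 _ [y1_ge0 <-]].
  by rewrite powR1.
by split; [exact: mulr_ge0 | rewrite powRM].
Qed.

Lemma ler_powR2r (r : R) : 0 < r -> {in Num.nneg &, {mono (@powR R)^~ r : x y / x <= y}}.
Proof. by move=> r_gt0; apply: le_mono_in; exact: gt0_ltr_powR. Qed.

Lemma powR_prod_le_mean n (E : 'I_n -> R) : (0 < n)%N -> (forall i, 0 <= E i) ->
  powR (\prod_i E i) n%:R^-1 <= (\sum_i E i) / n%:R.
Proof.
move=> n_gt0 E_ge0; have nR_neq0 : n%:R != 0 :> R by rewrite pnatr_eq0 -lt0n.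
have mean_ge0 : 0 <= (\sum_i E i) / n%:R by rewrite divr_ge0 ?sumr_ge0.
have [AGM _] := leif_AGM (A := predT) (fun i _ => E_ge0 i).
rewrite cardT size_enum_ord in AGM.
have -> : (\sum_i E i) / n%:R = powR (((\sum_i E i) / n%:R) ^+ n) n%:R^-1.
  by rewrite -powR_mulrn // -powRrM mulfV // powRr1.
by rewrite ler_powR2r ?invr_gt0 ?ltr0n ?nnegrE ?prodr_ge0 ?exprn_ge0.
Qed.

End PowR.

Section Homogenization.
Variables (R : realType) (n : nat) (mu : cube n -> R).

Definition dehomogenize (w : 'I_n + 'I_n -> R) (i : 'I_n) : R :=
  w (inl i) / w (inr i).

Definition hom_factor (w : 'I_n + 'I_n -> R) (i : 'I_n) : R :=
  marg_plus mu i * w (inl i) + marg_minus mu i * w (inr i).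

Lemma marg_plus_minus i : marg_plus mu i + marg_minus mu i = \sum_s mu s.
Proof. by rewrite [RHS](bigID (fun s : cube n => s i)). Qed.

Lemma gen_set_mu_hom (f : 'I_n + 'I_n -> R) :
  gen_set (mu_hom mu) f =
  \sum_s mu s * \prod_i (if s i then f (inl i) else f (inr i)).
Proof.
have prod_S_of s :
    \prod_(u in S_of s) f u = \prod_i (if s i then f (inl i) else f (inr i)).
  rewrite big_mkcond big_sumType /= -big_split /=; apply: eq_bigr => i _.
  by rewrite !inE; case: (s i); rewrite ?mulr1 ?mul1r.
rewrite /gen_set /mu_hom; under eq_bigr do rewrite big_distrl.
rewrite /= (partition_big (fun s => S_of s) xpredT) //=.
apply: eq_bigr => T _; apply: eq_big => // s /eqP <-.
by rewrite prod_S_of.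
Qed.

Lemma incl_prob_mu_hom u : incl_prob (mu_hom mu) u = \sum_(s | u \in S_of s) mu s.
Proof.
rewrite /incl_prob /mu_hom (partition_big (fun s => S_of s) (fun T => u \in T)) //.
apply: eq_bigr => T uT; apply: eq_bigl => s.
by case: (eqVneq (S_of s) T) => [->|]; rewrite ?uT ?andbF.
Qed.

Lemma sum_incl_prob_mu_hom (w : 'I_n + 'I_n -> R) :
  \sum_u incl_prob (mu_hom mu) u * w u = \sum_i hom_factor w i.
Proof.
rewrite big_sumType /= -big_split /=; apply: eq_bigr => i _.
by rewrite !incl_prob_mu_hom; congr (_ * _ + _ * _); apply: eq_bigl => s; rewrite inE.
Qed.

Lemma prod_hom_factor (w : 'I_n + 'I_n -> R) : (forall u, 0 < w u) ->
  \prod_i hom_factor w i =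
  \prod_i w (inr i) * \prod_i (marg_plus mu i * dehomogenize w i + marg_minus mu i).
Proof.
move=> w_gt0; rewrite -big_split /=; apply: eq_bigr => i _.
have wr_neq0 : w (inr i) != 0 by rewrite gt_eqF.
by rewrite /hom_factor /dehomogenize; field.
Qed.

Lemma gen_set_mu_hom_powR (w : 'I_n + 'I_n -> R) (a : R) : (forall u, 0 < w u) ->
  gen_set (mu_hom mu) (fun u => powR (w u) a) =
  powR (\prod_i w (inr i)) a * gen_cube mu (fun i => powR (dehomogenize w i) a).
Proof.
move=> w_gt0; rewrite gen_set_mu_hom /gen_cube big_distrr /=; apply: eq_bigr => s _.
rewrite mulrCA powR_prod => [|i]; last exact: ltW.
congr (_ * _); rewrite /= [X in _ * X]big_mkcond -big_split /=; apply: eq_bigr => i _.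
case: (s i); last by rewrite mulr1.
by rewrite -powRM ?ltW ?divr_gt0 // mulrC divfK ?gt_eqF.
Qed.

Hypothesis mu_ge0 : forall s, 0 <= mu s.

Lemma marg_plus_ge0 i : 0 <= marg_plus mu i.
Proof. exact: sumr_ge0. Qed.

Lemma marg_minus_ge0 i : 0 <= marg_minus mu i.
Proof. exact: sumr_ge0. Qed.

Lemma gen_cube_ge0 (z : 'I_n -> R) : (forall i, 0 <= z i) -> 0 <= gen_cube mu z.
Proof. by move=> z_ge0; apply: sumr_ge0 => s _; rewrite mulr_ge0 ?prodr_ge0. Qed.

Lemma product_domination_homE (w : 'I_n + 'I_n -> R) (a : R) : 0 < a -> (forall u, 0 < w u) ->
  (powR (gen_cube mu (fun i => powR (dehomogenize w i) a)) a^-1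
     <= \prod_i (marg_plus mu i * dehomogenize w i + marg_minus mu i)) =
  (powR (gen_set (mu_hom mu) (fun u => powR (w u) a)) a^-1 <= \prod_i hom_factor w i).
Proof.
move=> a_gt0 w_gt0; have B_gt0 : 0 < \prod_i w (inr i) by exact: prodr_gt0.
have G_ge0 : 0 <= gen_cube mu (fun i => powR (dehomogenize w i) a).
  by apply: gen_cube_ge0 => i; exact: powR_ge0.
rewrite gen_set_mu_hom_powR // prod_hom_factor //.
rewrite powRM ?powR_ge0 // -powRrM mulfV ?gt_eqF // powRr1 ?(ltW B_gt0) //.
by rewrite ler_pM2l.
Qed.

Lemma entropically_independent_atE (w : 'I_n + 'I_n -> R) (a : R) :
  (powR (gen_set (mu_hom mu) (fun u => powR (w u) a)) (n%:R * a)^-1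
     <= n%:R^-1 * \sum_u incl_prob (mu_hom mu) u * w u) =
  (powR (powR (gen_set (mu_hom mu) (fun u => powR (w u) a)) a^-1) n%:R^-1
     <= (\sum_i hom_factor w i) / n%:R).
Proof.
by rewrite sum_incl_prob_mu_hom invfM [_^-1 * a^-1]mulrC powRrM [_^-1 * _]mulrC.
Qed.

Lemma product_dominated_entropically_independent (a : R) (D : set ('I_n -> R)) :
  (0 < n)%N -> 0 < a ->
  product_dominated mu a D -> entropically_independent n (mu_hom mu) a (D_hom D).
Proof.
move=> n_gt0 a_gt0 PD w [w_gt0 Dw]; rewrite entropically_independent_atE.
have factor_ge0 i : 0 <= hom_factor w i.
  by rewrite addr_ge0 ?mulr_ge0 ?marg_plus_ge0 ?marg_minus_ge0 ?ltW.
apply: le_trans _ (powR_prod_le_mean n_gt0 factor_ge0).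
rewrite ler_powR2r ?invr_gt0 ?ltr0n ?nnegrE ?powR_ge0 ?prodr_ge0 //.
by rewrite -product_domination_homE //; exact: PD.
Qed.

Hypothesis mu_sum1 : \sum_s mu s = 1.

Lemma entropically_independent_product_dominated (a : R) (D : set ('I_n -> R)) :
  (0 < n)%N -> 0 < a -> D `<=` @pos_orthant R 'I_n ->
  entropically_independent n (mu_hom mu) a (D_hom D) -> product_dominated mu a D.
Proof.
move=> n_gt0 a_gt0 Dpos EI z Dz; have z_gt0 : forall i, 0 < z i := Dpos _ Dz.
pose c i := marg_plus mu i * z i + marg_minus mu i.
have c_gt0 i : 0 < c i.
  have := marg_plus_minus i; rewrite mu_sum1.
  by have := marg_plus_ge0 i; have := marg_minus_ge0 i; have := z_gt0 i; rewrite /c; nra.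
pose w u := match u with inl i => z i / c i | inr i => (c i)^-1 end.
have w_gt0 u : 0 < w u by case: u => i /=; rewrite ?divr_gt0 ?invr_gt0.
have dehom_w : dehomogenize w = z.
  by apply/funext => i; rewrite /dehomogenize /= invrK divfK ?gt_eqF.
have factor_w i : hom_factor w i = 1.
  by rewrite /hom_factor /= mulrA -mulrDl -/(c i) mulfV // gt_eqF.
have w_in : D_hom D w by split=> //; rewrite -[X in D X]/(dehomogenize w) dehom_w.
have := EI w w_in; rewrite entropically_independent_atE.
under eq_bigr do rewrite factor_w.
rewrite sumr_const card_ord mulfV ?pnatr_eq0 -?lt0n //.
rewrite [X in _ <= X](_ : 1 = powR 1 n%:R^-1); last by rewrite powR1.
rewrite ler_powR2r ?invr_gt0 ?ltr0n ?nnegrE ?powR_ge0 // => G_le1.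
rewrite -dehom_w product_domination_homE //.
by under eq_bigr do rewrite factor_w; rewrite big1_eq.
Qed.

End Homogenization.

Lemma D_hom_pos_orthant (R : realType) n :
  D_hom (@pos_orthant R 'I_n) = @pos_orthant R ('I_n + 'I_n).
Proof.
apply/seteqP; split=> w; first by case.
by move=> w_gt0; split=> // i; rewrite divr_gt0.
Qed.

Theorem lemma4p4 (R : realType) (n : nat) (mu : cube n -> R) (alpha : R) :
  (0 < n)%N -> is_distribution mu -> 0 < alpha < 1 ->
  (forall D : set ('I_n -> R), D `<=` @pos_orthant R 'I_n ->
     product_dominated mu alpha D <->
     entropically_independent n (mu_hom mu) alpha (D_hom D)) /\
  (product_dominated mu alpha (@pos_orthant R 'I_n) <->
     entropically_independent n (mu_hom mu) alpha (@pos_orthant R ('I_n + 'I_n))).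
Proof.
move=> n_gt0 [mu_ge0 mu_sum1] /andP[alpha_gt0 _].
have equiv D : D `<=` @pos_orthant R 'I_n ->
    product_dominated mu alpha D <->
    entropically_independent n (mu_hom mu) alpha (D_hom D).
  move=> Dpos; split.
  - exact: product_dominated_entropically_independent.
  - exact: entropically_independent_product_dominated.
split; first exact: equiv.
by rewrite -D_hom_pos_orthant; exact: equiv.
Qed.
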